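(* Let $0<\eta\le1/8$, $0<\delta<1$, and let $(q_1,\dots,q_n)$ be a probability distribution on $[n]$ (e.g. the diagonal of a density matrix $\tilde\rho$). Let $m=2.13\,\eta^{-2}(n\ln2+\ln(1/\delta))$, draw $N\sim\mathrm{Pois}(m)$, then draw $N$ independent samples from $(q_i)$, let $N_i$ be the number of samples equal to $i$, and set $\hat q_i=N_i/m$. Then with probability at least $1-\delta$, $\sum_{i=1}^n|q_i-\hat q_i|\le\eta$.
   Context: In the paper the samples are outcomes of measuring prepared copies of the state $\tilde\rho$ in the computational basis, so $q_i=\tilde\rho_{ii}$; the estimate divides by the expected number $m$ of samples, not by $N$. *)

From HB Require Import structures.
From mathcomp Require Import all_boot all_order all_algebra.
From mathcomp Require Import all_classical all_reals all_analysis.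
Set Implicit Arguments. Unset Strict Implicit. Unset Printing Implicit Defensive.
Import Order.TTheory GRing.Theory Num.Theory.
Local Open Scope ring_scope.

(* A run of the sampling procedure with N samples: the sequence of outcomes
   s : 'I_N -> 'I_n.  N_i = number of samples equal to i. *)
Definition sample_count (n N : nat) (s : {ffun 'I_N -> 'I_n}) (i : 'I_n) : nat :=
  #|[set j | s j == i]|.

Definition sample_prob (R : realType) (n N : nat) (q : 'I_n -> R)
  (s : {ffun 'I_N -> 'I_n}) : R := \prod_(j < N) q (s j).

Definition qhat (R : realType) (n N : nat) (m : R) (s : {ffun 'I_N -> 'I_n})
  (i : 'I_n) : R := (sample_count s i)%:R / m.

Definition good_event (R : realType) (n N : nat) (q : 'I_n -> R) (m eta : R)
  (s : {ffun 'I_N -> 'I_n}) : bool :=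
  \sum_(i < n) `|q i - qhat m s i| <= eta.

Definition m_of (R : realType) (n : nat) (eta delta : R) : R :=
  (213%:R / 100%:R) * eta ^-2 * (n%:R * ln 2 + ln (delta^-1)).

(* Probability of the good event under: N ~ Pois(m), then N i.i.d. samples
   from q.  Total probability formula over N (a series of nonneg. terms,
   taken in the extended reals). *)
Definition success_prob (R : realType) (n : nat) (q : 'I_n -> R) (m eta : R)
  : \bar R :=
  (\sum_(0 <= N <oo)
     (poisson_pmf m N *
       \sum_(s : {ffun 'I_N -> 'I_n} | good_event q m eta s) sample_prob q s)%:E)%E.

(* Since
   m * sum_i |q_i - qhat_i| = max over sign vectors sigma in {+1,-1}^n of
   sum_i sigma_i (N_i - m q_i), the bad event is covered by 2^n events
   sum_i sigma_i (N_i - m q_i) > m eta.  Conditionally on N the samples are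
   i.i.d., so Markov's inequality for exp (u * sum_i sigma_i (N_i - m q_i))
   gives a bound involving A^N with A = sum_i q_i e^(u sigma_i), and the
   Poisson generating function E[A^N] = e^(m (A - 1)) bounds each of the 2^n
   probabilities by exp (m (A - 1) - u m (sum_i sigma_i q_i + eta)).  For
   u = 2 eta / (2 + eta) one has e^(+-u) - 1 -+ u <= eta - u, so the exponent
   is at most -m eta^2 / (2 + eta) <= -(n ln 2 + ln (1/delta)). *)

From HB Require Import structures.
From mathcomp Require Import all_boot all_order all_algebra.
From mathcomp Require Import all_classical all_reals all_analysis.
From mathcomp Require Import ring lra.
Import Order.TTheory GRing.Theory Num.Theory numFieldNormedType.Exports.
Local Open Scope classical_set_scope.
Local Open Scope ring_scope.

Definition sign {R : realType} {n : nat} (σ : {ffun 'I_n -> bool}) (i : 'I_n) : R :=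
  if σ i then 1 else -1.

Lemma sum_mul_sample_count {R : realType} {n N : nat} (s : {ffun 'I_N -> 'I_n})
    (g : 'I_n -> R) :
  \sum_i g i * (sample_count s i)%:R = \sum_j g (s j).
Proof.
rewrite (partition_big s xpredT) //=; apply: eq_bigr => i _.
rewrite (eq_bigr (fun _ => g i)); last by move=> j /eqP->.
rewrite sumr_const mulr_natr /sample_count; congr (_ *+ _).
by apply: eq_card => j; rewrite !inE.
Qed.

Section ExpPoisson.
Context {R : realType}.

Lemma series_exp_coeff_le (x : R) K : 0 <= x -> series (exp_coeff x) K <= expR x.
Proof.
move=> x_ge0; apply: nondecreasing_cvgn_le; last exact: is_cvg_series_exp_coeff.
by apply: nondecreasing_series => k _ _; apply: exp_coeff_ge0.
Qed.

Lemma expR_ge1Dx_sqr (x : R) : 0 <= x -> 1 + x + x ^+ 2 / 2 <= expR x.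
Proof.
move=> x_ge0; have := series_exp_coeff_le x 3 x_ge0.
rewrite /series /exp_coeff /= !big_nat_recr //= big_nil expr0 expr1 add0r !divr1.
by rewrite (_ : 2`!%:R = 2 :> R).
Qed.

Lemma expR_pade_le (x : R) : 0 <= x -> expR x * (2 - x) <= 2 + x.
Proof.
move=> x_ge0.
pose f (y : R) := 2 + y - expR y * (2 - y).
pose df (y : R) := 1 - expR y * (1 - y).
have f_deriv (y : R) : is_derive y 1 f (df y).
  by apply: is_derive_eq; rewrite /df /GRing.scale /=; ring.
have f_derivable (y : R) : derivable f y 1 by apply: ex_derive; apply: f_deriv.
have [c _ f_mvt] := MVT_segment x_ge0 (fun y _ => f_deriv y)
  (derivable_within_continuous (fun y _ => f_derivable y)).
have df_ge0 : 0 <= df c.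
  have := expR_ge1Dx (- c); have := expR_gt0 c.
  have := expRxMexpNx_1 c; rewrite /df subr_ge0; nra.
have f0 : f 0 = 0 by rewrite /f expR0; ring.
have : 0 <= f x - f 0 by rewrite f_mvt subr0 mulr_ge0.
rewrite f0 subr0 /f; lra.
Qed.

Lemma poisson_pmfE (m : R) N : 0 < m -> poisson_pmf m N = expR (- m) * exp_coeff m N.
Proof. by move=> m_gt0; rewrite /poisson_pmf m_gt0 /exp_coeff /= mulrC. Qed.

Lemma sum_poisson_pmf_mul_exprn_le (m A : R) K : 0 < m -> 0 <= A ->
  \sum_(0 <= N < K) poisson_pmf m N * A ^+ N <= expR (m * (A - 1)).
Proof.
move=> m_gt0 A_ge0.
have -> : \sum_(0 <= N < K) poisson_pmf m N * A ^+ N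
          = expR (- m) * series (exp_coeff (m * A)) K.
  rewrite /series /= mulr_sumr; apply: eq_bigr => N _.
  by rewrite poisson_pmfE // /exp_coeff /= exprMn; ring.
rewrite mulrBr mulr1 addrC expRD ler_wpM2l ?expR_ge0 //.
by rewrite series_exp_coeff_le // mulr_ge0 // ltW.
Qed.

Lemma cvg_sum_poisson_pmf (m : R) : 0 < m ->
  \sum_(0 <= N < K) poisson_pmf m N @[K --> \oo] --> (1 : R).
Proof.
move=> m_gt0; rewrite -(expRxMexpNx_1 m) mulrC.
have -> : (fun K => \sum_(0 <= N < K) poisson_pmf m N)
          = (fun K => expR (- m) * series (exp_coeff m) K).
  apply/funext => K; rewrite /series /= mulr_sumr.
  by apply: eq_bigr => N _; rewrite poisson_pmfE.
by apply: cvgMl_tmp; apply: is_cvg_series_exp_coeff.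
Qed.

Lemma lim_le_nneseries (u x : nat -> R) (l : R) : (forall N, 0 <= u N) ->
  x @ \oo --> l -> (forall K, x K <= \sum_(0 <= N < K) u N) ->
  (l%:E <= \sum_(0 <= N <oo) (u N)%:E)%E.
Proof.
move=> u_ge0 x_cvg x_le.
rewrite -(cvg_lim _ x_cvg) // -EFin_lim; last exact: (cvgP l).
apply: lee_lim.
- by apply: (cvgP l%:E); apply: cvg_comp x_cvg _.
- by apply: is_cvg_nneseries => N _ _; rewrite lee_fin.
- by near=> K; rewrite /= sumEFin lee_fin.
Unshelve. all: by end_near.
Qed.

End ExpPoisson.

(* The choice of u that turns the Pade bound e^u <= (2 + u) / (2 - u) into
   e^u <= 1 + eta. *)
Definition chernoff_param {R : realType} (eta : R) : R := 2 * eta / (2 + eta).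

Lemma expR_sign_chernoff_le {R : realType} {n} (σ : {ffun 'I_n -> bool}) i (eta : R) :
  0 <= eta ->
  expR (chernoff_param eta * sign σ i) - 1 - chernoff_param eta * sign σ i
  <= eta - chernoff_param eta.
Proof.
move=> eta_ge0; set u := chernoff_param eta.
have u_def : u * (2 + eta) = 2 * eta by rewrite /u /chernoff_param; field; lra.
have u_ge0 : 0 <= u by rewrite divr_ge0 //; lra.
have u_lt2 : u < 2 by rewrite /u /chernoff_param ltr_pdivrMr; lra.
rewrite /sign; case: (σ i); rewrite ?mulr1 ?mulrN1 ?opprK.
- have := expR_pade_le u u_ge0; nra.
- have eta_def : eta * (2 - u) = 2 * u by lra.
  have gap_ge0 : 0 <= 1 + eta - 2 * u by nra.
  have : 1 <= (1 + eta - 2 * u) * (1 + u + u ^+ 2 / 2) by nra.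
  have := ler_wpM2l gap_ge0 (expR_ge1Dx_sqr u u_ge0).
  have := expR_gt0 (- u); have := expRxMexpNx_1 u; nra.
Qed.

Section Sampling.
Variables (R : realType) (n : nat) (q : 'I_n -> R).
Hypothesis q_ge0 : forall i, 0 <= q i.

Lemma sample_prob_ge0 N (s : {ffun 'I_N -> 'I_n}) : 0 <= sample_prob q s.
Proof. by apply: prodr_ge0 => j _. Qed.

Lemma sum_sample_prob_prod N (f : 'I_n -> R) :
  \sum_(s : {ffun 'I_N -> 'I_n}) sample_prob q s * \prod_j f (s j)
  = (\sum_i q i * f i) ^+ N.
Proof.
under eq_bigr do rewrite /sample_prob -big_split /=.
by rewrite -(bigA_distr_bigA (fun (_ : 'I_N) i => q i * f i)) prodr_const card_ord.
Qed.

Hypothesis q_sum1 : \sum_i q i = 1.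

Lemma sum_sample_prob N : \sum_(s : {ffun 'I_N -> 'I_n}) sample_prob q s = 1.
Proof.
transitivity (\sum_(s : {ffun 'I_N -> 'I_n}) sample_prob q s * \prod_(j < N) (1 : R)).
  by apply: eq_bigr => s _; rewrite prodr_const expr1n mulr1.
rewrite (sum_sample_prob_prod N (fun => 1)).
by under eq_bigr do rewrite mulr1; rewrite q_sum1 expr1n.
Qed.

Variables (m eta : R).
Hypothesis m_gt0 : 0 < m.

Definition signed_dev {N} (σ : {ffun 'I_n -> bool}) (s : {ffun 'I_N -> 'I_n}) : R :=
  \sum_i sign σ i * ((sample_count s i)%:R - m * q i).

Lemma not_good_signed_dev N (s : {ffun 'I_N -> 'I_n}) :
  ~~ good_event q m eta s -> exists σ, m * eta < signed_dev σ s.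
Proof.
rewrite /good_event -ltNge => bad.
(* For the sign pattern of N_i - m q_i the signed deviation is m |q - qhat|_1. *)
exists [ffun i => m * q i <= (sample_count s i)%:R].
rewrite /signed_dev (eq_bigr (fun i => m * `|q i - qhat m s i|)).
  by rewrite -mulr_sumr ltr_pM2l.
move=> i _; rewrite /sign ffunE /qhat.
have -> : q i - (sample_count s i)%:R / m = - (((sample_count s i)%:R - m * q i) / m).
  by field; rewrite gt_eqF.
rewrite normrN normrM (gtr0_norm (x := m^-1)) ?invr_gt0 // mulrCA divff ?gt_eqF // mulr1.
case: ifP => [le_mq_cnt | /negbT]; first by rewrite mul1r ger0_norm // subr_ge0.
by rewrite -ltNge => lt_cnt_mq; rewrite ltr0_norm ?mulN1r // subr_lt0.
Qed.

Lemma expR_signed_dev N u σ (s : {ffun 'I_N -> 'I_n}) :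
  expR (u * signed_dev σ s)
  = expR (- (u * m * \sum_i sign σ i * q i)) * \prod_j expR (u * sign σ (s j)).
Proof.
rewrite -expR_sum -expRD -(sum_mul_sample_count s (fun i => u * sign σ i)).
rewrite /signed_dev !mulr_sumr -sumrN -big_split /=; congr expR.
by apply: eq_bigr => i _; ring.
Qed.

Definition sign_mgf (u : R) (σ : {ffun 'I_n -> bool}) : R :=
  \sum_i q i * expR (u * sign σ i).

Lemma bad_prob_le N u : 0 < u ->
  \sum_(s : {ffun 'I_N -> 'I_n} | ~~ good_event q m eta s) sample_prob q s
  <= \sum_σ expR (- (u * m * (\sum_i sign σ i * q i + eta))) * sign_mgf u σ ^+ N.
Proof.
move=> u_gt0.
pose tilt σ (s : {ffun 'I_N -> 'I_n}) := expR (u * (signed_dev σ s - m * eta)).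
have tilt_ge0 σ s : 0 <= tilt σ s by apply: expR_ge0.
have markov s : ~~ good_event q m eta s -> 1 <= \sum_σ tilt σ s.
  move=> /not_good_signed_dev [σ dev_gt]; rewrite (bigD1 σ) //=.
  apply: (@le_trans _ _ (tilt σ s)); last by rewrite lerDl sumr_ge0.
  by rewrite ltW // expR_gt1 mulr_gt0 // subr_gt0.
apply: (@le_trans _ _ (\sum_s sample_prob q s * \sum_σ tilt σ s)).
  rewrite [leRHS](bigID (fun s => ~~ good_event q m eta s)) /=.
  apply: le_trans (_ : _ <= \sum_(s | ~~ good_event q m eta s)
                             sample_prob q s * \sum_σ tilt σ s) _.
    apply: ler_sum => s bad; rewrite ler_peMr ?sample_prob_ge0 //; exact: markov.
  by rewrite lerDl sumr_ge0 // => s _; rewrite mulr_ge0 ?sample_prob_ge0 ?sumr_ge0.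
under eq_bigr do rewrite mulr_sumr; rewrite exchange_big /=.
apply/ler_sum => σ _; rewrite le_eqVlt; apply/orP; left; apply/eqP.
rewrite /sign_mgf -sum_sample_prob_prod mulr_sumr; apply: eq_bigr => s _.
rewrite /tilt mulrBr (mulrA u m eta) expRD expR_signed_dev mulrDr opprD expRD.
by ring.
Qed.

Lemma sign_mgf_le u c σ : (forall i, expR (u * sign σ i) - 1 - u * sign σ i <= c) ->
  sign_mgf u σ <= 1 + u * \sum_i sign σ i * q i + c.
Proof.
move=> pointwise_le.
have : \sum_i q i * (expR (u * sign σ i) - 1 - u * sign σ i) <= \sum_i q i * c.
  by apply: ler_sum => i _; apply: ler_wpM2l.
rewrite -mulr_suml q_sum1 mul1r.
have -> : \sum_i q i * (expR (u * sign σ i) - 1 - u * sign σ i)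
          = sign_mgf u σ - \sum_i q i - u * \sum_i sign σ i * q i.
  by rewrite /sign_mgf mulr_sumr -!sumrB; apply: eq_bigr => i _; ring.
by rewrite q_sum1; lra.
Qed.

Lemma chernoff_sign_le σ : 0 <= eta ->
  expR (- (chernoff_param eta * m * (\sum_i sign σ i * q i + eta)))
    * expR (m * (sign_mgf (chernoff_param eta) σ - 1))
  <= expR (- (m * eta ^+ 2 / (2 + eta))).
Proof.
move=> eta_ge0.
have mgf_le := sign_mgf_le _ _ σ (fun i => expR_sign_chernoff_le σ i _ eta_ge0).
set u := chernoff_param eta in mgf_le *.
have exponent : m * (eta - u - u * eta) = - (m * eta ^+ 2 / (2 + eta)).
  by rewrite /u /chernoff_param; field; lra.
rewrite -expRD ler_expR -exponent.
have := ler_wpM2l (ltW m_gt0) mgf_le; lra.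
Qed.

Lemma sum_poisson_bad_le K : 0 < eta ->
  \sum_(0 <= N < K) poisson_pmf m N *
    \sum_(s : {ffun 'I_N -> 'I_n} | ~~ good_event q m eta s) sample_prob q s
  <= 2 ^+ n * expR (- (m * eta ^+ 2 / (2 + eta))).
Proof.
move=> eta_gt0; set u := chernoff_param eta.
have u_gt0 : 0 < u by rewrite divr_gt0 ?mulr_gt0 ?addr_gt0.
apply: (@le_trans _ _ (\sum_(0 <= N < K) poisson_pmf m N * \sum_σ
    expR (- (u * m * (\sum_i sign σ i * q i + eta))) * sign_mgf u σ ^+ N)).
  apply: ler_sum => N _; apply: ler_wpM2l; first exact: poisson_pmf_ge0.
  exact: bad_prob_le.
under eq_bigr do rewrite mulr_sumr; rewrite exchange_big /=.
have card_signs : #|{ffun 'I_n -> bool}| = (2 ^ n)%N.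
  by rewrite card_ffun card_bool card_ord.
rewrite -natrX -card_signs mulr_natl -sumr_const.
apply: ler_sum => σ _; under eq_bigr do rewrite mulrCA; rewrite -mulr_sumr.
apply: le_trans (chernoff_sign_le σ (ltW eta_gt0)).
apply: ler_wpM2l; first exact: expR_ge0.
apply: sum_poisson_pmf_mul_exprn_le => //.
by apply: sumr_ge0 => i _; rewrite mulr_ge0 ?expR_ge0.
Qed.

Lemma sum_poisson_good_ge K : 0 < eta ->
  \sum_(0 <= N < K) poisson_pmf m N - 2 ^+ n * expR (- (m * eta ^+ 2 / (2 + eta)))
  <= \sum_(0 <= N < K) poisson_pmf m N *
       \sum_(s : {ffun 'I_N -> 'I_n} | good_event q m eta s) sample_prob q s.
Proof.
move=> eta_gt0.
have good_prob N :
    \sum_(s : {ffun 'I_N -> 'I_n} | good_event q m eta s) sample_prob q s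
    = 1 - \sum_(s : {ffun 'I_N -> 'I_n} | ~~ good_event q m eta s) sample_prob q s.
  by rewrite -(sum_sample_prob N) [in RHS](bigID (good_event q m eta)) /= addrK.
rewrite [leRHS](eq_bigr (fun N => poisson_pmf m N - poisson_pmf m N *
  \sum_(s : {ffun 'I_N -> 'I_n} | ~~ good_event q m eta s) sample_prob q s)); last first.
  by move=> N _; rewrite good_prob mulrBr mulr1.
have := sum_poisson_bad_le K eta_gt0; rewrite sumrB; lra.
Qed.

End Sampling.

Lemma nln2_addr_lnV_gt0 {R : realType} n (delta : R) : 0 < delta -> delta < 1 ->
  0 < n%:R * ln 2 + ln delta^-1.
Proof.
move=> delta_gt0 delta_lt1.
have : 0 <= n%:R * ln (2 : R) by rewrite mulr_ge0 // ln_ge0 // ler1n.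
have : 0 < ln delta^-1 by rewrite ln_gt0 // invf_gt1.
lra.
Qed.

Lemma m_of_gt0 {R : realType} n (eta delta : R) : 0 < eta -> 0 < delta -> delta < 1 ->
  0 < m_of n eta delta.
Proof.
move=> eta_gt0 delta_gt0 delta_lt1.
by rewrite /m_of !mulr_gt0 ?invr_gt0 ?exprn_gt0 ?nln2_addr_lnV_gt0.
Qed.

Lemma m_of_chernoff_le {R : realType} n (eta delta : R) :
  0 < eta -> eta <= 1 / 8 -> 0 < delta -> delta < 1 ->
  2 ^+ n * expR (- (m_of n eta delta * eta ^+ 2 / (2 + eta))) <= delta.
Proof.
move=> eta_gt0 eta_le delta_gt0 delta_lt1.
set L := n%:R * ln 2 + ln delta^-1.
have L_gt0 : 0 < L by apply: nln2_addr_lnV_gt0.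
have expNL : 2 ^+ n * expR (- L) = delta.
  rewrite /L opprD expRD expRN expRM_natl lnK ?posrE // lnV ?posrE // opprK.
  by rewrite lnK ?posrE // mulrA divff ?mul1r // expf_neq0.
rewrite -[leRHS]expNL ler_wpM2l ?exprn_ge0 // ler_expR lerN2.
(* The constant 2.13 only has to exceed 2 + eta <= 2.125. *)
have -> : m_of n eta delta * eta ^+ 2 = 213 / 100 * L.
  by rewrite /m_of -/L; field; rewrite gt_eqF.
rewrite ler_pdivlMr 1?[leRHS]mulrC ?ler_pM2l //; lra.
Qed.

Theorem lemma8 (R : realType) (n : nat) (eta delta : R) (q : 'I_n -> R) :
  0 < eta -> eta <= 1 / 8 -> 0 < delta -> delta < 1 ->
  (forall i, 0 <= q i) -> \sum_(i < n) q i = 1 ->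
  ((1 - delta)%:E <= success_prob q (m_of n eta delta) eta)%E.
Proof.
move=> eta_gt0 eta_le delta_gt0 delta_lt1 q_ge0 q_sum1.
have m_gt0 : 0 < m_of n eta delta by apply: m_of_gt0.
set c := 2 ^+ n * expR (- (m_of n eta delta * eta ^+ 2 / (2 + eta))).
apply: (@le_trans _ _ (1 - c)%:E).
  by rewrite lee_fin lerD2l lerN2 m_of_chernoff_le.
apply: lim_le_nneseries.
- by move=> N; rewrite mulr_ge0 ?poisson_pmf_ge0 ?sumr_ge0 // => s _; apply: sample_prob_ge0.
- exact: cvgB (cvg_sum_poisson_pmf _ m_gt0) (cvg_cst c).
- by move=> K; apply: sum_poisson_good_ge.
Qed.
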